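(* Let $S[1..n]$ be a string and let $i,j,x,y$ be integers with $1\le i<j\le x\le y\le n$. If $\mathrm{LLR}_j$ does not exist, or exists but does not cover the interval $[x..y]$, then $\mathrm{LLR}_i$ does not exist or does not cover $[x..y]$.
   Context: For $1\le i\le j\le n$, $S[i..j]=S[i]\cdots S[j]$. A substring $S[i..j]$ covers $[x..y]$ if $i\le x\le y\le j$. A substring $S[i..j]$ is unique if there is no other substring $S[i'..j']$ with $S[i'..j']=S[i..j]$ and $i'\ne i$; it is a repeat otherwise. The left-bounded longest repeat starting at position $k$, $\mathrm{LLR}_k$, is a repeat $S[k..j]$ such that either $j=n$ or $S[k..j+1]$ is unique; it does not exist if $S[k]$ (the single character) is unique. *)

(* Strings are sequences over an eqType alphabet; positions are 1-based. *)
From mathcomp Require Import all_boot.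
Set Implicit Arguments. Unset Strict Implicit. Unset Printing Implicit Defensive.

Section Strings.
Variable T : eqType.
Implicit Types (S : seq T) (i j k : nat).

Definition occ S i j : bool := (1 <= i) && (i <= j) && (j <= size S).

Definition substr S i j : seq T := take (j - i + 1) (drop (i - 1) S).

Definition is_repeat S i j : Prop :=
  occ S i j /\ exists i' j', [/\ occ S i' j', i' != i & substr S i' j' = substr S i j].

Definition is_unique S i j : Prop := occ S i j /\ ~ is_repeat S i j.

Definition is_LLR S k j : Prop :=
  is_repeat S k j /\ (j = size S \/ is_unique S k j.+1).

Definition covers i j x y : Prop := (i <= x) && (x <= y) && (y <= j).

Definition LLR_covers S k x y : Prop := exists j, is_LLR S k j /\ covers k j x y.

End Strings.

From mathcomp Require Import all_boot.
From mathcomp Require Import zify.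
From Stdlib Require Import Classical.
Set Implicit Arguments. Unset Strict Implicit.

(* If S[i..e] is a repeat, occurring also at i' <> i, then for i < j <= e the
   suffix S[j..e] occurs also at i' + (j - i) <> j, so it is a repeat too; and
   any repeat S[j..e] can be extended to the right until it becomes LLR_j.
   Hence if LLR_i = S[i..e] covers [x..y], then S[j..e] is a repeat and LLR_j
   ends at or after e >= y, so it covers [x..y]. *)

Section LeftBoundedRepeats.
Variables (T : eqType) (S : seq T).

Lemma occP a b : reflect [/\ 1 <= a, a <= b & b <= size S] (occ S a b).
Proof. by rewrite /occ; apply: (iffP idP) => [/andP[/andP[]]|[-> -> ->]]. Qed.

Lemma size_substr a b : occ S a b -> size (substr S a b) = b - a + 1.
Proof. by case/occP=> *; rewrite size_take size_drop; case: ifP; lia. Qed.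

Lemma substr_addl a b d :
  1 <= a -> d <= b - a -> substr S (a + d) b = drop d (substr S a b).
Proof.
move=> ha hd; rewrite /substr.
have -> : a + d - 1 = d + (a - 1) by lia.
by rewrite -drop_drop take_drop; congr (drop _ (take _ _)); lia.
Qed.

Lemma repeat_suffix i j e :
  i < j -> j <= e -> is_repeat S i e -> is_repeat S j e.
Proof.
move=> hij hje [ho [i' [e' [ho' hne heq]]]].
have hsz := size_substr ho'; rewrite heq (size_substr ho) in hsz.
case/occP: ho => hi _ he; case/occP: ho' => hi' _ he'.
split; first by apply/occP; split; lia.
exists (i' + (j - i)), e'; split.
- by apply/occP; split; lia.
- by apply/eqP; move/eqP: hne; lia.
- have hj : j = i + (j - i) by lia.
  rewrite [in RHS]hj !substr_addl ?heq //; lia.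
Qed.

Lemma repeat_extends_to_LLR k e :
  is_repeat S k e -> exists2 e', e <= e' & is_LLR S k e'.
Proof.
move hm: (size S - e) => m; elim: m e hm => [|m IH] e hm hr.
  exists e => //; split => //; left.
  by case: hr => /occP[_ _ he] _; lia.
have he : e < size S by lia.
case: (classic (is_repeat S k e.+1)) => [hr1|hu].
  by have [e' he' hl] := IH e.+1 ltac:(lia) hr1; exists e' => //; lia.
exists e => //; split => //; right; split => //.
by case: hr => /occP[hk hke _] _; apply/occP; split; lia.
Qed.

End LeftBoundedRepeats.

Theorem lemma4 (T : eqType) (S : seq T) (i j x y : nat) :
  1 <= i -> i < j -> j <= x -> x <= y -> y <= size S ->
  ~ LLR_covers S j x y -> ~ LLR_covers S i x y.
Proof.
move=> _ hij hjx hxy _ hnj [e [[hr _] /andP[_ hye]]]; apply: hnj.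
have hje : j <= e by lia.
have [e' hee' hl] := repeat_extends_to_LLR (repeat_suffix hij hje hr).
by exists e'; split => //; rewrite /covers hxy andbT; lia.
Qed.
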